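(* For every $f\in\mathcal G$, the series $\sum_{n=1}^\infty f(nx)$ converges absolutely for almost every $x>0$, so $Pf(x)=\sum_{n=1}^\infty f(nx)-\frac1x\int_0^\infty f(t)\,dt$ is well defined a.e. on $(0,\infty)$, and $Pf$ is locally integrable on $(0,\infty)$.
   Context: A good kernel is a continuously differentiable function $f:[0,\infty)\to\mathbb C$ with $f(x)\to0$ as $x\to\infty$, $f\in L_1(0,\infty)$, and $\int_0^\infty t|f'(t)|\,dt<\infty$; $\mathcal G$ denotes the class of good kernels. *)

(* A complex-valued function f : [0,oo) -> C is
   represented by its real and imaginary parts u, v : R -> R (f = u + i v);
   values at negative arguments are irrelevant and never used. *)
From HB Require Import structures.
From mathcomp Require Import all_boot all_order all_algebra.
From mathcomp Require Import all_classical all_reals all_analysis.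
Set Implicit Arguments. Unset Strict Implicit. Unset Printing Implicit Defensive.
Import Order.TTheory GRing.Theory Num.Theory.
Import numFieldNormedType.Exports.
Local Open Scope classical_set_scope.
Local Open Scope ring_scope.

Definition Rpos {R : realType} : set R := `]0%R, +oo[%classic.

Definition cnorm {R : realType} (u v : R -> R) (t : R) : R :=
  Num.sqrt (u t ^+ 2 + v t ^+ 2).

Definition C1_on_nonneg {R : realType} (u u' : R -> R) : Prop :=
  [/\ forall x : R, 0 < x -> is_derive x 1 u (u' x),
      (fun h : R => h^-1 * (u h - u 0)) @ 0^'+ --> u' 0 &
      {within `[0, +oo[, continuous u'}].

Definition good_kernel {R : realType} (u v : R -> R) : Prop :=
  exists u' v' : R -> R,
    [/\ C1_on_nonneg u u', C1_on_nonneg v v',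
        u x @[x --> +oo] --> 0 /\ v x @[x --> +oo] --> 0,
        (@lebesgue_measure R).-integrable Rpos (EFin \o u) /\
        (@lebesgue_measure R).-integrable Rpos (EFin \o v) &
        (\int[@lebesgue_measure R]_(t in Rpos) (t * cnorm u' v' t)%:E
           < +oo)%E].

(* sum_{n>=1} w(n x) if the series converges, 0 otherwise
   (the value on the divergence set is immaterial: it is null) *)
Definition nsum {R : realType} (w : R -> R) (x : R) : R :=
  let S := series (fun k : nat => w (k.+1%:R * x)) in
  if `[< cvg (S @ \oo) >] then lim (S @ \oo) else 0.

(* real and imaginary parts of
   Pf(x) = sum_{n>=1} f(nx) - (1/x) int_0^oo f(t) dt *)
Definition Pf {R : realType} (w : R -> R) (x : R) : R :=
  nsum w x - x^-1 * (\int[@lebesgue_measure R]_(t in Rpos) w t)%R.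

(** For [0 < x <= a] and [t] in
    [[a, a + x]], the fundamental theorem of calculus gives
    [|f(a)| <= |f(t)| + int_a^(a+x) |f'|]; averaging over [t] and using
    [x <= s] on the interval yields
    [x |f(a)| <= int_a^(a+x) (|f(s)| + s |f'(s)|) ds].
    Applied at [a = x, 2x, ..., Nx] and summed over the disjoint intervals,
    [x * sum_(n<=N) |f(nx)| <= int_0^oo (|f| + s |f'|) =: C], which is finite for
    a good kernel. So the series converges absolutely for every [x > 0] (not
    merely a.e.) and [|Pf(x)| <= (C + |int f|) / x], a bound integrable on every
    compact subset of [(0, oo)]. *)
From HB Require Import structures.
From mathcomp Require Import all_boot all_order all_algebra.
From mathcomp Require Import all_classical all_reals all_analysis.
From mathcomp Require Import measurable_realfun.
Set Implicit Arguments. Unset Strict Implicit. Unset Printing Implicit Defensive.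
Import Order.TTheory GRing.Theory Num.Theory.
Import numFieldNormedType.Exports.
Local Open Scope classical_set_scope.
Local Open Scope ring_scope.

Lemma RposE (R : realType) (x : R) : Rpos x = (0 < x).
Proof. by rewrite /Rpos /= in_itv /= andbT. Qed.

Lemma measurable_Rpos (R : realType) : measurable (Rpos : set R).
Proof. exact: measurable_itv. Qed.

Lemma measurable_fun_continuous_pos (R : realType) (f : R -> R) (D : set R) :
  {in `]0, +oo[, continuous f} -> measurable D -> D `<=` `]0, +oo[ ->
  measurable_fun D f.
Proof.
move=> cf mD DP; apply: (measurable_funS _ DP) => //.
apply: open_continuous_measurable_fun; first exact: rray_open.
by move=> x; rewrite inE /= => /cf.
Qed.

Lemma measurable_fun_continuous_Rpos (R : realType) (f : R -> R) :
  {in `]0, +oo[, continuous f} -> measurable_fun Rpos f.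
Proof. by move=> cf; exact: measurable_fun_continuous_pos cf (@measurable_Rpos R) _. Qed.

Lemma measurable_fun_norm_pos (R : realType) (f : R -> R) (D : set R) :
  {in `]0, +oo[, continuous f} -> measurable D -> D `<=` `]0, +oo[ ->
  measurable_fun D (fun s => `|f s|).
Proof.
move=> cf mD DP; apply: (measurableT_comp (@normr_measurable R setT)).
exact: measurable_fun_continuous_pos.
Qed.

Lemma compact_pos_inv_bounded {R : realType} {K : set R} :
  compact K -> K `<=` Rpos -> exists M, forall x, K x -> x^-1 <= M.
Proof.
move=> cK KR.
have : compact [set x^-1 | x in K].
  apply: continuous_compact => //; apply: continuous_in_subspaceT => x.
  rewrite inE => /KR; rewrite RposE => x0.
  by apply: inv_continuous; rewrite gt_eqF.
move=> /compact_bounded[N [_ N1x]].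
exists (`|N| + 1) => x Kx; apply: le_trans (ler_norm _) _.
by apply: (N1x (`|N| + 1)); [rewrite ltr_pwDr // ler_norm | exists x].
Qed.

Lemma normr_le_hypotl (R : realType) (a b : R) : `|a| <= Num.sqrt (a ^+ 2 + b ^+ 2).
Proof. by rewrite -sqrtr_sqr; apply: ler_wsqrtr; rewrite lerDl sqr_ge0. Qed.

Lemma normr_le_hypotr (R : realType) (a b : R) : `|b| <= Num.sqrt (a ^+ 2 + b ^+ 2).
Proof. by rewrite -sqrtr_sqr; apply: ler_wsqrtr; rewrite lerDr sqr_ge0. Qed.

Lemma hypot_le_normD (R : realType) (a b : R) :
  Num.sqrt (a ^+ 2 + b ^+ 2) <= `|a| + `|b|.
Proof.
rewrite -[X in _ <= X]ger0_norm ?addr_ge0 // -sqrtr_sqr; apply: ler_wsqrtr.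
by rewrite sqrrD !real_normK ?num_real // addrAC lerDl mulrn_wge0 // mulr_ge0.
Qed.

Lemma cvg_series_hypot (R : realType) (a b : R ^nat) :
  cvgn (series (fun k => `|a k|)) -> cvgn (series (fun k => `|b k|)) ->
  cvgn (series (fun k => Num.sqrt (a k ^+ 2 + b k ^+ 2))).
Proof.
move=> ca cb; apply: (@series_le_cvg _ _ (fun k => `|a k| + `|b k|)).
- by move=> k; exact: sqrtr_ge0.
- by move=> k; rewrite addr_ge0.
- by move=> k; exact: hypot_le_normD.
- exact: is_cvg_seriesD.
Qed.

Section good_kernel_estimates.
Variable R : realType.
Notation mu := (@lebesgue_measure R).
Variables u u' : R -> R.
Hypothesis du : forall x : R, 0 < x -> is_derive x 1 u (u' x).
Hypothesis cu' : {within `[0, +oo[, continuous u'}.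

Lemma continuous_pos : {in `]0, +oo[, continuous u}.
Proof.
move=> x; rewrite in_itv /= andbT => x0.
apply: differentiable_continuous; apply/derivable1_diffP.
by have [] := du x0.
Qed.

Lemma derivative_continuous_pos : {in `]0, +oo[, continuous u'}.
Proof. by have /continuous_within_itvcyP[] := cu'. Qed.

Definition kernel_weight (s : R) : R := `|u s| + s * `|u' s|.

Lemma kernel_weight_ge0 s : 0 <= s -> 0 <= kernel_weight s.
Proof. by move=> s0; rewrite addr_ge0 // mulr_ge0. Qed.

Lemma measurable_fun_weighted_derivative (D : set R) :
  measurable D -> D `<=` `]0, +oo[ -> measurable_fun D (fun s => s * `|u' s|).
Proof.
move=> mD DP; apply: measurable_funM; first exact: measurable_id.
exact: measurable_fun_norm_pos derivative_continuous_pos mD DP.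
Qed.

Lemma measurable_kernel_weight (D : set R) :
  measurable D -> D `<=` `]0, +oo[ -> measurable_fun D (EFin \o kernel_weight).
Proof.
move=> mD DP; apply/measurable_EFinP; apply: measurable_funD.
- exact: measurable_fun_norm_pos continuous_pos mD DP.
- exact: measurable_fun_weighted_derivative.
Qed.

Lemma normB_le_integral_derivative a b : 0 < a -> a < b ->
  (`|u b - u a|%:E <= \int[mu]_(s in `[a, b]) `|u' s|%:E)%E.
Proof.
move=> a0 ab.
have sub : `[a, b] `<=` `]0, +oo[.
  by move=> s /=; rewrite !in_itv /= andbT => /andP[+ _]; exact: lt_le_trans.
rewrite -abse_EFin EFinB -(@continuous_FTC2 R u' u a b ab).
- apply: le_trans (le_abse_integral _ _ _) _ => //.
  apply/measurable_EFinP.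
  exact: measurable_fun_continuous_pos derivative_continuous_pos _ sub.
- apply: continuous_subspaceW cu' => s /=; rewrite !in_itv /= andbT.
  by move=> /andP[+ _]; apply: le_trans; exact: ltW.
- split.
  + move=> x; rewrite in_itv /= => /andP[ax _].
    by have [] := du (lt_trans a0 ax).
  + by apply: cvg_at_right_filter; apply: continuous_pos; rewrite in_itv /= a0.
  + apply: cvg_at_left_filter; apply: continuous_pos.
    by rewrite in_itv /= andbT (lt_trans a0 ab).
- move=> x; rewrite in_itv /= => /andP[ax _].
  by rewrite derive1E; have [] := du (lt_trans a0 ax).
Qed.

Lemma norm_le_norm_add_integral_derivative a b t : 0 < a -> a <= t -> t <= b ->
  (`|u a|%:E <= `|u t|%:E + \int[mu]_(s in `[a, b]) `|u' s|%:E)%E.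
Proof.
move=> a0 at_ tb.
have J0 : (0 <= \int[mu]_(s in `[a, b]) `|u' s|%:E)%E.
  by apply: integral_ge0 => s _; rewrite lee_fin.
have [<-|aNt] := eqVneq a t; first exact: leeDl.
have aLt : a < t by rewrite lt_neqAle aNt at_.
apply: (@le_trans _ _ (`|u t|%:E + `|u t - u a|%:E)%E).
  rewrite -EFinD lee_fin.
  by have := ler_normB (u t) (u t - u a); rewrite opprB addrCA subrr addr0.
rewrite leeD2l //; apply: le_trans (normB_le_integral_derivative a0 aLt) _.
apply: ge0_subset_integral => //.
- apply/measurable_EFinP; apply: measurable_fun_norm_pos => //.
    exact: derivative_continuous_pos.
  by move=> s /=; rewrite !in_itv /= andbT => /andP[+ _]; exact: lt_le_trans.
- by move=> s /=; rewrite !in_itv /= => /andP[-> /le_trans]; apply.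
Qed.

Lemma mul_integral_norm_derivative_le (a x : R) : 0 < x -> x <= a ->
  (x%:E * \int[mu]_(s in `[a, (a + x)%R]) `|u' s|%:E <=
   \int[mu]_(s in `[a, (a + x)%R[) (s * `|u' s|)%:E)%E.
Proof.
move=> x0 xa; have a0 : 0 < a := lt_le_trans x0 xa.
have sub : `[a, a + x] `<=` `]0, +oo[.
  by move=> s /=; rewrite !in_itv /= andbT => /andP[+ _]; exact: lt_le_trans.
have mU' : measurable_fun `[a, a + x] (fun s => `|u' s|%:E).
  apply/measurable_EFinP; apply: measurable_fun_norm_pos => //.
  exact: derivative_continuous_pos.
rewrite -ge0_integralZl //; last by rewrite lee_fin ltW.
rewrite integral_itv_bndo_bndc; last first.
  apply/measurable_EFinP; apply: measurable_fun_weighted_derivative => //.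
  by apply: subset_trans sub; apply: subset_itvl; rewrite bnd_simp.
apply: ge0_le_integral => //.
- by move=> s _; rewrite lee_fin mulr_ge0 // ltW.
- by apply: emeasurable_funM => //; exact: measurable_cst.
- by apply/measurable_EFinP; exact: measurable_fun_weighted_derivative.
- move=> s; rewrite /= in_itv /= => /andP[aS _].
  by rewrite -EFinM lee_fin ler_wpM2r // (le_trans xa aS).
Qed.

Lemma integral_cst_itvco (c : \bar R) (a x : R) : 0 < x ->
  (\int[mu]_(s in `[a, (a + x)%R[) c = c * x%:E)%E.
Proof.
move=> x0; have muI : mu `[a, (a + x)%R[ = x%:E.
  by rewrite lebesgue_measure_itv /= lte_fin ltrDl x0 -EFinD addrAC subrr add0r.
rewrite integral_cst; last exact: measurable_itv.
by set m := (X in (_ * X)%E); have -> : m = x%:E by exact: muI.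
Qed.

Lemma mul_norm_le_integral_kernel_weight (a x : R) : 0 < x -> x <= a ->
  ((x * `|u a|)%:E <= \int[mu]_(s in `[a, (a + x)%R[) (kernel_weight s)%:E)%E.
Proof.
move=> x0 xa; have a0 : 0 < a := lt_le_trans x0 xa.
have mI : measurable (`[a, a + x[ : set R) by exact: measurable_itv.
have sub : `[a, a + x[ `<=` `]0, +oo[.
  by move=> s /=; rewrite !in_itv /= andbT => /andP[+ _]; exact: lt_le_trans.
have mU : measurable_fun `[a, a + x[ (fun s => `|u s|%:E).
  by apply/measurable_EFinP; apply: measurable_fun_norm_pos => //; exact: continuous_pos.
have mV : measurable_fun `[a, a + x[ (fun s => (s * `|u' s|)%:E).
  by apply/measurable_EFinP; exact: measurable_fun_weighted_derivative.
set J := (\int[mu]_(s in `[a, (a + x)%R]) `|u' s|%:E)%E.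
have J0 : (0 <= J)%E by apply: integral_ge0 => s _; rewrite lee_fin.
rewrite (@eq_integral _ _ _ mu _ (fun s => `|u s|%:E + (s * `|u' s|)%:E)%E);
  last by move=> s _; rewrite EFinD.
rewrite ge0_integralD //; last first.
  move=> s; rewrite /= in_itv /= => /andP[+ _] => /(lt_le_trans a0) s0.
  by rewrite lee_fin mulr_ge0 // ltW.
rewrite mulrC EFinM -(integral_cst_itvco _ a x0).
apply: (@le_trans _ _ (\int[mu]_(s in `[a, (a + x)%R[) (`|u s|%:E + J))%E).
  apply: ge0_le_integral => //.
  - by apply: emeasurable_funD; [exact: mU | exact: measurable_cst].
  - move=> s; rewrite /= in_itv /= => /andP[aS Sx].
    exact: norm_le_norm_add_integral_derivative (ltW Sx).
rewrite ge0_integralD //.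
by rewrite integral_cst_itvco // muleC leeD2l // mul_integral_norm_derivative_le.
Qed.

Lemma partial_sum_le_integral_kernel_weight (x : R) N : 0 < x ->
  ((x * \sum_(k < N) `|u (k.+1%:R * x)|)%:E <=
   \int[mu]_(s in `[x, (N.+1%:R * x)%R[) (kernel_weight s)%:E)%E.
Proof.
move=> x0; elim: N => [|N IH].
  rewrite big_ord0 mulr0; apply: integral_ge0 => s.
  rewrite /= in_itv /= => /andP[+ _] => /(lt_le_trans x0) s0.
  by rewrite lee_fin kernel_weight_ge0 // ltW.
have xN : x <= N.+1%:R * x by rewrite -{1}(mul1r x) ler_wpM2r ?(ltW x0) // ler1n.
have -> : N.+2%:R * x = N.+1%:R * x + x by rewrite -addn1 natrD mulrDl mul1r.
rewrite (@itv_bndbnd_setU _ _ _ (BLeft (N.+1%:R * x))); last 2 first.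
- by rewrite bnd_simp.
- by rewrite bnd_simp lerDl ltW.
have sub : `[x, N.+1%:R * x[ `|` `[N.+1%:R * x, N.+1%:R * x + x[ `<=` `]0, +oo[.
  move=> s [] /=; rewrite !in_itv /= andbT => /andP[+ _]; apply: lt_le_trans => //.
  exact: lt_le_trans xN.
rewrite ge0_integral_setU //.
- by rewrite big_ord_recr /= mulrDr EFinD leeD // mul_norm_le_integral_kernel_weight.
- by apply: measurable_kernel_weight sub; apply: measurableU; exact: measurable_itv.
- move=> s /sub; rewrite /= in_itv /= andbT => s0.
  by rewrite lee_fin kernel_weight_ge0 // ltW.
- apply/disj_setPS => s [] /=; rewrite !in_itv /= => /andP[_ h1] /andP[h2 _].
  by move: (lt_le_trans h1 h2); rewrite ltxx.
Qed.

Definition kernel_weight_integral : \bar R :=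
  (\int[mu]_(s in Rpos) (kernel_weight s)%:E)%E.

Lemma kernel_weight_integral_ge0 : (0 <= kernel_weight_integral)%E.
Proof.
by apply: integral_ge0 => s; rewrite RposE => s0; rewrite lee_fin kernel_weight_ge0 // ltW.
Qed.

Lemma kernel_weight_integral_lt_pinfty (w : R -> R) :
  measurable_fun Rpos w -> (forall s, 0 < s -> `|u' s| <= w s) ->
  mu.-integrable Rpos (EFin \o u) ->
  (\int[mu]_(t in Rpos) (t * w t)%:E < +oo)%E ->
  (kernel_weight_integral < +oo)%E.
Proof.
move=> mw uw /integrableP[_ iu] fin.
have mR := @measurable_Rpos R.
rewrite /kernel_weight_integral (@eq_integral _ _ _ mu _
  (fun s => `|u s|%:E + (s * `|u' s|)%:E)%E); last by move=> s _; rewrite EFinD.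
rewrite ge0_integralD //.
- apply: lte_add_pinfty; first by under eq_integral do rewrite -abse_EFin.
  apply: le_lt_trans fin; apply: ge0_le_integral => //.
  + by move=> s; rewrite RposE => s0; rewrite lee_fin mulr_ge0 // ltW.
  + by apply/measurable_EFinP; exact: measurable_fun_weighted_derivative.
  + by apply/measurable_EFinP; apply: measurable_funM => //; exact: measurable_id.
  + by move=> s; rewrite RposE => s0; rewrite lee_fin ler_wpM2l ?uw // ltW.
- apply/measurable_EFinP; apply: measurable_fun_norm_pos => //.
  exact: continuous_pos.
- by move=> s; rewrite RposE => s0; rewrite lee_fin mulr_ge0 // ltW.
- by apply/measurable_EFinP; exact: measurable_fun_weighted_derivative.
Qed.

Hypothesis kernel_weight_integral_finite : (kernel_weight_integral < +oo)%E.

Lemma partial_sum_norm_le x N : 0 < x ->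
  \sum_(0 <= k < N) `|u (k.+1%:R * x)| <= fine kernel_weight_integral / x.
Proof.
move=> x0; rewrite ler_pdivlMr // mulrC -lee_fin fineK; last first.
  by rewrite ge0_fin_numE // kernel_weight_integral_ge0.
rewrite big_mkord; apply: le_trans (partial_sum_le_integral_kernel_weight N x0) _.
apply: ge0_subset_integral => //; first exact: measurable_itv.
- by apply: measurable_kernel_weight => //; exact: measurable_itv.
- by move=> s; rewrite RposE => s0; rewrite lee_fin kernel_weight_ge0 // ltW.
- by move=> s /=; rewrite RposE in_itv /= => /andP[+ _]; exact: lt_le_trans.
Qed.

Lemma cvg_series_norm x : 0 < x -> cvgn (series (fun k => `|u (k.+1%:R * x)|)).
Proof.
move=> x0; apply: nondecreasing_is_cvgn.
  by apply: nondecreasing_series => k _ _; exact: normr_ge0.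
by exists (fine kernel_weight_integral / x) => _ [n _ <-]; exact: partial_sum_norm_le.
Qed.

Lemma nsum_cvg x : 0 < x -> series (fun k => u (k.+1%:R * x)) @ \oo --> nsum u x.
Proof.
move=> x0; have cu : cvgn (series (fun k => u (k.+1%:R * x))).
  by apply: normed_cvg; exact: cvg_series_norm.
by rewrite /nsum asboolT.
Qed.

Lemma norm_nsum_le x : 0 < x -> `|nsum u x| <= fine kernel_weight_integral / x.
Proof.
move=> x0; rewrite -(cvg_lim _ (nsum_cvg x0)) //.
apply: le_trans (lim_series_norm _) _; first exact: cvg_series_norm.
apply: limr_le; first exact: cvg_series_norm.
by apply: nearW => n; exact: partial_sum_norm_le.
Qed.

Lemma measurable_nsum : measurable_fun Rpos (nsum u).
Proof.
apply: (@measurable_fun_cvg _ _ R Rpos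
  (fun m x => series (fun k => u (k.+1%:R * x)) m)); last first.
  by move=> x; rewrite RposE => x0; exact: nsum_cvg.
move=> m; apply: measurable_sum => k.
apply: measurable_fun_continuous_Rpos => x; rewrite in_itv /= andbT => x0.
apply: (@continuous_comp _ _ _ ( *%R (k.+1%:R : R)) u); first exact: mulrl_continuous.
by apply: continuous_pos; rewrite in_itv /= andbT mulr_gt0.
Qed.

Lemma measurable_Pf : measurable_fun Rpos (Pf u).
Proof.
apply: measurable_funB; first exact: measurable_nsum.
apply: measurable_funM => //; apply: measurable_fun_continuous_Rpos => x.
by rewrite in_itv /= andbT => x0; apply: inv_continuous; rewrite gt_eqF.
Qed.

Let Pf_bound := fine kernel_weight_integral + `|\int[mu]_(t in Rpos) u t|.

Lemma norm_Pf_le x : 0 < x -> `|Pf u x| <= Pf_bound / x.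
Proof.
move=> x0; apply: le_trans (ler_normB _ _) _; rewrite mulrDl.
apply: lerD; first exact: norm_nsum_le.
by rewrite normrM normfV (gtr0_norm x0) mulrC.
Qed.

Lemma Pf_locally_integrable : locally_integrable Rpos (Pf u).
Proof.
split; [exact: measurable_Pf | exact: rray_open | move=> K KR cK].
have [M HM] := compact_pos_inv_bounded cK KR.
have mK := compact_measurable cK.
have Pf_bound_ge0 : 0 <= Pf_bound by rewrite addr_ge0 // fine_ge0 // kernel_weight_integral_ge0.
apply: (@le_lt_trans _ _ (\int[mu]_(x in K) (Pf_bound * `|M|)%:E)%E).
  apply: ge0_le_integral => //.
  - apply/measurable_EFinP; apply: measurableT_comp; first exact: normr_measurable.
    exact: measurable_funS (@measurable_Rpos R) KR measurable_Pf.
  - move=> x Kx /=; rewrite lee_fin.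
    have x0 : 0 < x by rewrite -RposE; exact: KR.
    apply: le_trans (norm_Pf_le x0) _.
    by rewrite ler_wpM2l // (le_trans (HM _ Kx)) // ler_norm.
rewrite integral_cst //; apply: lte_mul_pinfty => //.
- by rewrite lee_fin mulr_ge0.
- exact: compact_finite_measure.
Qed.

End good_kernel_estimates.

Theorem mainTheorem6 (R : realType) (u v : R -> R) :
  good_kernel u v ->
  ({ae (@lebesgue_measure R), forall x : R, 0 < x ->
      cvg (series (fun k : nat => cnorm u v (k.+1%:R * x)) @ \oo)}
   /\ locally_integrable Rpos (Pf u)
   /\ locally_integrable Rpos (Pf v)).
Proof.
move=> [u' [v' [[du _ cu'] [dv _ cv'] _ [iu iv] fin]]].
have mcn : measurable_fun Rpos (cnorm u' v').
  apply: measurableT_comp; first exact: (continuous_measurable_fun (@sqrt_continuous R)).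
  apply: measurable_funD; apply: measurable_funX; apply: measurable_fun_continuous_Rpos.
  - exact: derivative_continuous_pos cu'.
  - exact: derivative_continuous_pos cv'.
have Wu := kernel_weight_integral_lt_pinfty du cu' mcn
  (fun s _ => normr_le_hypotl (u' s) (v' s)) iu fin.
have Wv := kernel_weight_integral_lt_pinfty dv cv' mcn
  (fun s _ => normr_le_hypotr (u' s) (v' s)) iv fin.
split; last by split; exact: Pf_locally_integrable.
apply: aeW => x x0; apply: cvg_series_hypot; exact: cvg_series_norm.
Qed.
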